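(* Let $(C^\bullet,\partial)$ be a complex of finite-dimensional complex vector spaces of odd length $d=2r-1$ with a chirality operator $\Gamma$, let $\mathcal B=\Gamma\partial+\partial\Gamma$, and let $\mathcal I\subset[0,\infty)$ be an interval. For $j=0,\dots,d$ let $C^j_{\mathcal I}\subset C^j$ be the span of the generalized eigenvectors of the restriction of $\mathcal B^2$ to $C^j$ corresponding to eigenvalues $\lambda$ with $|\lambda|\in\mathcal I$, and let $\partial_{\mathcal I}$ be the restriction of $\partial$ to $C^\bullet_{\mathcal I}$ (which is a subcomplex). If $0\notin\mathcal I$, then the complex $(C^\bullet_{\mathcal I},\partial_{\mathcal I})$ is acyclic.
   Context: A chirality operator is an involution $\Gamma:C^\bullet\to C^\bullet$ with $\Gamma(C^j)=C^{d-j}$ for all $j$. *)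

From HB Require Import structures.
From mathcomp Require Import all_boot all_order all_algebra.
From mathcomp Require Import complex.
From mathcomp Require Import reals.
Set Implicit Arguments. Unset Strict Implicit. Unset Printing Implicit Defensive.
Import Order.TTheory GRing.Theory Num.Theory.
Local Open Scope ring_scope.

(* v (a row vector, maps act on the right) is a generalized eigenvector of A
   for the eigenvalue lam (zero vector allowed; it does not affect spans). *)
Definition gen_eigvec (K : fieldType) (N : nat) (A : 'M[K]_N) (lam : K)
  (v : 'rV[K]_N) : Prop :=
  exists k : nat, v *m (A - lam%:M) ^+ k = 0.

(* v lies in the span of the generalized eigenvectors of the restriction of
   A to the (A-stable) subspace Cj, for eigenvalues lam satisfying P lam. *)
Definition spectral_span (K : fieldType) (N : nat) (Cj A : 'M[K]_N)
  (P : K -> Prop) (v : 'rV[K]_N) : Prop :=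
  exists s : seq (K * 'rV[K]_N),
    (forall p, p \in s -> [/\ (p.2 <= Cj)%MS, P p.1 & gen_eigvec A p.1 p.2])
    /\ v = \sum_(p <- s) p.2.

(* With B := G D + D G, the relations D^2 = 0 and G^2 = 1 give
   B^2 = G D G D + D G D G, which commutes with D and G and preserves every
   C^j.  On the spectral subspace for eigenvalues away from 0 the operator
   B^2 is invertible, so v = v B^2 p(B^2) for some polynomial p.  If v D = 0
   the summand D G D G vanishes and v = (v G D G p(B^2)) D, where G D G
   lowers the degree by one and p(B^2) preserves the spectral subspaces; in
   degree 0 already v G D = 0, since G D maps C^0 to degree d + 1. *)

From HB Require Import structures.
From mathcomp Require Import all_boot all_order all_algebra.
From mathcomp Require Import complex.
From mathcomp Require Import reals.
From mathcomp Require Import zify.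
Set Implicit Arguments. Unset Strict Implicit. Unset Printing Implicit Defensive.
Import Order.TTheory GRing.Theory Num.Theory.
Local Open Scope ring_scope.

Lemma spectral_span_sub (F : fieldType) (N : nat) (Cj A : 'M[F]_N) P v :
  spectral_span Cj A P v -> (v <= Cj)%MS.
Proof.
by case=> s [hs ->]; rewrite big_seq; apply: summx_sub => p /hs[].
Qed.

Section SpectralSpan.
Variables (F : fieldType) (n : nat) (A : 'M[F]_n.+1).

Lemma horner_mx_XsubC_exp lam k :
  horner_mx A (('X - lam%:P) ^+ k) = (A - lam%:M) ^+ k.
Proof. by rewrite rmorphXn rmorphB /= horner_mx_X horner_mx_C. Qed.

Lemma gen_eigvec_mulmx lam v M :
  comm_mx A M -> gen_eigvec A lam v -> gen_eigvec A lam (v *m M).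
Proof.
move=> cAM [k vk]; exists k.
rewrite -mulmxA -horner_mx_XsubC_exp -(comm_horner_mx _ cAM).
by rewrite mulmxA horner_mx_XsubC_exp vk mul0mx.
Qed.

Lemma spectral_span_mulmx (Cj Cj' M : 'M_n.+1) (P : F -> Prop) v :
  comm_mx A M -> (Cj *m M <= Cj')%MS ->
  spectral_span Cj A P v -> spectral_span Cj' A P (v *m M).
Proof.
move=> cAM sCjM [s [hs ->]].
exists [seq (p.1, p.2 *m M) | p <- s]; split; last by rewrite mulmx_suml big_map.
move=> _ /mapP[p /hs[sp Pp ep] ->]; split => //=.
  exact: submx_trans (submxMr M sp) sCjM.
exact: gen_eigvec_mulmx.
Qed.

Lemma gen_eigvecs_annihilator (s : seq (F * 'rV[F]_n.+1)) :
  (forall p, p \in s -> p.1 != 0 /\ gen_eigvec A p.1 p.2) ->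
  exists2 q : {poly F}, q.[0] != 0 & forall p, p \in s -> p.2 *m horner_mx A q = 0.
Proof.
elim: s => [|[lam u] s IHs] hs.
  by exists 1 => //; rewrite hornerC oner_neq0.
have [q q0 qs] : exists2 q : {poly F}, q.[0] != 0 &
    forall p, p \in s -> p.2 *m horner_mx A q = 0.
  by apply: IHs => p sp; apply: hs; rewrite inE sp orbT.
have [lam0 [k uk]] := hs _ (mem_head _ _).
exists (('X - lam%:P) ^+ k * q).
  by rewrite hornerM horner_exp hornerXsubC sub0r mulf_neq0 ?expf_neq0 ?oppr_eq0.
move=> p; rewrite inE => /predU1P[-> /= | sp].
  by rewrite rmorphM /= horner_mx_XsubC_exp -mulmxE mulmxA uk mul0mx.
by rewrite mulrC rmorphM -mulmxE mulmxA qs // mul0mx.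
Qed.

Lemma spectral_span_nz_mulA (Cj : 'M_n.+1) (P : F -> Prop) v :
  (forall lam, P lam -> lam != 0) -> spectral_span Cj A P v ->
  exists p : {poly F}, v = v *m A *m horner_mx A p.
Proof.
move=> Pnz [s [hs vs]].
have [q q0 qs] := @gen_eigvecs_annihilator s (fun p sp =>
  let: And3 _ Pp ep := hs p sp in conj (Pnz _ Pp) ep).
have vq : v *m horner_mx A q = 0.
  by rewrite vs mulmx_suml big1_seq // => p /andP[_ /qs].
have /factor_theorem[q' Dq] : root (q - q.[0]%:P) 0.
  by rewrite rootE hornerD hornerN hornerC subrr.
set c := q.[0] in q0 *; exists (- c^-1 *: q').
move/eqP: vq; rewrite -(subrK c%:P q) Dq subr0 !rmorphD rmorphM /=.
rewrite horner_mx_X horner_mx_C -mulmxE mulmxDr addr_eq0 mul_mx_scalar => /eqP vq.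
rewrite linearZ /= -scalemxAr -mulmxA (comm_mx_horner _ (comm_mx_refl A)).
by rewrite vq scaleNr scalerN opprK scalerA mulVf // scale1r.
Qed.

End SpectralSpan.

Section ChiralComplex.
Variables (F : fieldType) (r N : nat) (C : 'I_(r.*2) -> 'M[F]_N) (D G : 'M[F]_N).
Hypothesis r_gt0 : (0 < r)%N.
Hypothesis DD0 : D *m D = 0.
Hypothesis CD : forall j : 'I_(r.*2),
  (C j *m D <= \sum_(k < r.*2 | k == j.+1 :> nat) C k)%MS.
Hypothesis GG1 : G *m G = 1%:M.
Hypothesis CG : forall j : 'I_(r.*2), (C j *m G == C (rev_ord j))%MS.

(* [Cdeg m] is [C m] for [m < 2r] and [0] beyond, so that shifting degrees
   needs no range checks. *)
Definition Cdeg (m : nat) := (\sum_(k < r.*2 | k == m :> nat) C k)%MS.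

Lemma Cdeg_ord (i : 'I_(r.*2)) : Cdeg i = C i.
Proof. by rewrite /Cdeg (eq_bigl (pred1 i)) ?big_pred1_eq. Qed.

Lemma Cdeg_out m : (r.*2 <= m)%N -> Cdeg m = 0.
Proof.
by move=> le_m; rewrite /Cdeg big_pred0 // => k; rewrite ltn_eqF // (leq_trans _ le_m).
Qed.

Lemma Cdeg_mulD m : (Cdeg m *m D <= Cdeg m.+1)%MS.
Proof.
have [lt_m | le_m] := ltnP m r.*2; last by rewrite Cdeg_out // mul0mx sub0mx.
by rewrite -[m]/(nat_of_ord (Ordinal lt_m)) Cdeg_ord CD.
Qed.

Lemma Cdeg_mulG m : (Cdeg m *m G <= Cdeg (r.*2 - m.+1))%MS.
Proof.
have [lt_m | le_m] := ltnP m r.*2; last by rewrite Cdeg_out // mul0mx sub0mx.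
rewrite -[m]/(nat_of_ord (Ordinal lt_m)) Cdeg_ord.
rewrite -[(r.*2 - _)%N]/(nat_of_ord (rev_ord (Ordinal lt_m))) Cdeg_ord.
by case/andP: (CG (Ordinal lt_m)).
Qed.

Lemma Cdeg0_mulGD : Cdeg 0 *m G *m D = 0.
Proof.
apply/eqP; rewrite -submx0 -(Cdeg_out (leqnn r.*2)).
have -> : r.*2 = (r.*2 - 1).+1 by rewrite subn1 prednK // double_gt0.
exact: submx_trans (submxMr _ (Cdeg_mulG 0)) (Cdeg_mulD _).
Qed.

Lemma Cdeg_mulGDG m : (Cdeg m.+1 *m G *m D *m G <= Cdeg m)%MS.
Proof.
have [lt_m | le_m] := ltnP m.+1 r.*2; last by rewrite Cdeg_out // !mul0mx sub0mx.
apply: submx_trans (submxMr _ (submxMr _ (Cdeg_mulG _))) _.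
apply: submx_trans (submxMr _ (Cdeg_mulD _)) _.
by apply: submx_trans (Cdeg_mulG _) _; have -> : (r.*2 - (r.*2 - m.+2).+2 = m)%N by lia.
Qed.

Lemma C0_mulGD (j : 'I_(r.*2)) : j = 0%N :> nat -> C j *m G *m D = 0.
Proof. by move=> j0; rewrite -Cdeg_ord j0 Cdeg0_mulGD. Qed.

Lemma C_mulGDG (i j : 'I_(r.*2)) :
  j = i.+1 :> nat -> (C j *m (G *m D *m G) <= C i)%MS.
Proof. by move=> ji; rewrite -!Cdeg_ord ji !mulmxA Cdeg_mulGDG. Qed.

Local Notation B := (G *m D + D *m G).

Lemma sqr_B : B *m B = G *m D *m G *m D + D *m G *m D *m G.
Proof.
rewrite mulmxDl !mulmxDr !mulmxA -(mulmxA G D D) -(mulmxA D G G) DD0 GG1.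
by rewrite mulmx0 mul0mx mulmx1 DD0 addr0 add0r.
Qed.

Lemma comm_D_B : comm_mx D B.
Proof.
rewrite /comm_mx mulmxDl mulmxDr (mulmxA D D) -(mulmxA G D D) DD0.
by rewrite mul0mx mulmx0 addr0 add0r mulmxA.
Qed.

Lemma comm_G_B : comm_mx G B.
Proof.
rewrite /comm_mx mulmxDl mulmxDr (mulmxA G G) -(mulmxA D G G) GG1.
by rewrite mul1mx mulmx1 addrC !mulmxA.
Qed.

Lemma comm_D_sqr_B : comm_mx D (B *m B).
Proof. exact: comm_mxM comm_D_B comm_D_B. Qed.

Lemma comm_G_sqr_B : comm_mx G (B *m B).
Proof. exact: comm_mxM comm_G_B comm_G_B. Qed.

Lemma stable_sqr_B (i : 'I_(r.*2)) : stablemx (C i) (B *m B).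
Proof.
rewrite sqr_B mulmxDr !mulmxA -Cdeg_ord; apply: addmx_sub.
  case: i => [[|m] lt_m] /=; first by rewrite Cdeg0_mulGD !mul0mx sub0mx.
  exact: submx_trans (submxMr _ (Cdeg_mulGDG _)) (Cdeg_mulD _).
by apply: submx_trans (Cdeg_mulGDG i); rewrite !submxMr ?Cdeg_mulD.
Qed.

Lemma cycle_mul_sqr_B m (v : 'M_(m, N)) :
  v *m D = 0 -> v *m (B *m B) = v *m (G *m D *m G) *m D.
Proof. by move=> vD; rewrite sqr_B mulmxDr !mulmxA vD !mul0mx addr0. Qed.

End ChiralComplex.

Theorem lemma5p5 (R : realType) (r N : nat) (C : 'I_(r.*2) -> 'M[R[i]]_N)
  (D G : 'M[R[i]]_N) (I : interval R) :
  (0 < r)%N ->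
  mxdirect (\sum_(j < r.*2) C j) ->
  (\sum_(j < r.*2) C j == 1%:M)%MS ->
  D *m D = 0 ->
  (forall j : 'I_(r.*2), (C j *m D <= \sum_(k < r.*2 | k == j.+1 :> nat) C k)%MS) ->
  G *m G = 1%:M ->
  (forall j : 'I_(r.*2), (C j *m G == C (rev_ord j))%MS) ->
  (I <= `[0, +oo[)%O ->
  0 \notin I ->
  let B := G *m D + D *m G in
  let CI := fun j : 'I_(r.*2) =>
    spectral_span (C j) (B *m B) (fun lam => complex.Re `|lam| \in I) in
  forall (j : 'I_(r.*2)) (v : 'rV[R[i]]_N),
    CI j v -> v *m D = 0 ->
    v = 0 \/ exists (i : 'I_(r.*2)) (w : 'rV[R[i]]_N),
               i.+1 = j :> nat /\ CI i w /\ w *m D = v.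
Proof.
case: N => [|n] in C D G *; first by move=> *; left; apply: thinmx0.
move=> r_gt0 _ _ DD0 CD GG1 CG _ I0 B CI j v vCI vD.
have Pnz (lam : R[i]) : complex.Re `|lam| \in I -> lam != 0.
  by apply: contraTneq => ->; rewrite normr0.
have [p vA] := spectral_span_nz_mulA Pnz vCI.
set M := horner_mx (B *m B) p in vA.
have cDM : comm_mx D M := comm_mx_horner p (comm_D_sqr_B G DD0).
rewrite (cycle_mul_sqr_B DD0 GG1 vD) -mulmxA cDM !mulmxA in vA.
case: j => [[|i] lt_j] in vCI vA *.
  have vGD : v *m G *m D = 0.
    have j0 : Ordinal lt_j = 0%N :> nat by [].
    apply/eqP; rewrite -submx0 -(C0_mulGD r_gt0 CD CG j0).
    by rewrite !submxMr // (spectral_span_sub vCI).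
  by left; rewrite vA vGD !mul0mx.
right; exists (Ordinal (ltnW lt_j)), (v *m (G *m D *m G *m M)).
split=> //; split; last by rewrite !mulmxA.
apply: spectral_span_mulmx vCI.
  have cBD := comm_mx_sym (comm_D_sqr_B G DD0).
  have cBG := comm_mx_sym (comm_G_sqr_B D GG1).
  by apply: comm_mxM; [apply: comm_mxM => //; apply: comm_mxM | apply: comm_mx_horner].
have ji : Ordinal lt_j = (Ordinal (ltnW lt_j)).+1 :> nat by [].
rewrite mulmxA; apply: submx_trans (submxMr M (C_mulGDG r_gt0 CD CG ji)) _.
exact: horner_mx_stable (stable_sqr_B r_gt0 DD0 CD GG1 CG _).
Qed.
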